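(* Let $M$ be a matroid on a finite set $E$ and let $P=\{K_1,K_2,\dots,K_t\}$ (with the $K_i$ distinct) be a partition of $\cup\mathcal{B}(M)$. Then $|B\cap K_i|=1$ for every $B\in\mathcal{B}(M)$ and every $i\in\{1,\dots,t\}$ if and only if $\mathcal{B}(M)=\{\{b_1,b_2,\dots,b_t\}: b_i\in K_i,\ 1\le i\le t\}$.
   Context: $\mathcal{B}(M)$ denotes the family of bases of $M$ and $\cup\mathcal{B}(M)$ the union of all bases. A partition of a set $U$ is a family of nonempty pairwise disjoint subsets of $U$ whose union is $U$. *)

From mathcomp Require Import all_boot.
Set Implicit Arguments. Unset Strict Implicit. Unset Printing Implicit Defensive.

Definition is_matroid_bases (T : finType) (E : {set T}) (bases : {set {set T}}) : Prop :=
  [/\ bases != set0,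
      (forall B, B \in bases -> B \subset E) &
      (forall B1 B2, B1 \in bases -> B2 \in bases ->
         forall x, x \in B1 :\: B2 ->
         exists2 y, y \in B2 :\: B1 & (y |: (B1 :\ x)) \in bases)].

Definition union_bases (T : finType) (bases : {set {set T}}) : {set T} :=
  \bigcup_(B in bases) B.

Definition transversals (T : finType) (t : nat) (K : 'I_t -> {set T}) : {set {set T}} :=
  [set B : {set T} | [exists b : {ffun 'I_t -> T},
      [forall i, b i \in K i] && (B == [set b i | i : 'I_t])]].

From mathcomp Require Import all_boot.
Set Implicit Arguments.
Unset Strict Implicit.
Unset Printing Implicit Defensive.

(* If every basis meets every block exactly once, then every basis is a
   transversal.  Conversely, a basis B can trade its element c of a block K i
   for any other x of K i: exchanging c against a basis through x produces a
   basis whose element in K i can only be x.  Starting from a basis as close as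
   possible to a given transversal S and making such trades shows S is a basis.
   The other implication holds because the blocks are disjoint. *)

Lemma partition_blocks_disjoint (T : finType) (D : {set T}) (t : nat)
    (K : 'I_t -> {set T}) :
  injective K -> partition [set K i | i : 'I_t] D ->
  forall i j x, x \in K i -> x \in K j -> i = j.
Proof.
move=> Kinj /and3P[_ /trivIsetP trivK _] i j x xi xj.
have [//|neq_ij] := eqVneq i j.
have /trivK: K i != K j by apply: contra neq_ij => /eqP/Kinj->.
by rewrite !imset_f // => /(_ isT isT)/disjointFr/(_ xi); rewrite xj.
Qed.

Lemma setD_swap_proper (T : finType) (A S : {set T}) c s :
  c \in A -> c \notin S -> s \in S -> (s |: (A :\ c)) :\: S \proper A :\: S.
Proof.
move=> cA cS sS; apply/properP; split.
  apply/subsetP=> x; rewrite !inE => /andP[xS /orP[/eqP xs|/andP[_ ->]]].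
    by rewrite xs sS in xS.
  by rewrite xS.
exists c; rewrite !inE ?cS ?cA //= eqxx orbF.
by apply: contraNneq cS => ->.
Qed.

Section Transversals.

Variables (T : finType) (t : nat) (K : 'I_t -> {set T}).
Hypothesis K_disjoint : forall i j x, x \in K i -> x \in K j -> i = j.

Lemma transversal_setIblock (b : 'I_t -> T) i :
  (forall j, b j \in K j) -> [set b j | j : 'I_t] :&: K i = [set b i].
Proof.
move=> bK; apply/setP=> x; rewrite !inE.
apply/andP/eqP=> [[/imsetP[j _ ->] bj]|->].
  by rewrite (K_disjoint (bK j) bj).
by rewrite imset_f ?bK.
Qed.

Lemma transversals_meet_blocks S i : S \in transversals K -> #|S :&: K i| = 1.
Proof.
rewrite inE => /existsP[b /andP[/forallP bK /eqP->]].
by rewrite transversal_setIblock ?cards1.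
Qed.

Variables (E : {set T}) (bases : {set {set T}}).
Hypothesis bases_matroid : is_matroid_bases E bases.
Hypothesis blocks_cover : \bigcup_(i < t) K i = union_bases bases.
Hypothesis bases_meet_blocks :
  forall B, B \in bases -> forall i, #|B :&: K i| = 1.

Lemma basis_setIblock B i x :
  B \in bases -> x \in B -> x \in K i -> B :&: K i = [set x].
Proof.
move=> HB xB xK; have /eqP/cards1P[c Hc] := bases_meet_blocks HB i.
have : x \in B :&: K i by rewrite inE xB.
by rewrite Hc inE => /eqP->.
Qed.

Lemma basis_block_exists B i : B \in bases -> exists2 c, c \in B & c \in K i.
Proof.
move=> HB; have /eqP/cards1P[c Hc] := bases_meet_blocks HB i.
have : c \in B :&: K i by rewrite Hc set11.
by rewrite inE => /andP[cB cK]; exists c.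
Qed.

Lemma basis_mem_block B x : B \in bases -> x \in B -> exists i, x \in K i.
Proof.
move=> HB xB; have : x \in union_bases bases by apply/bigcupP; exists B.
by rewrite -blocks_cover => /bigcupP[i _ xi]; exists i.
Qed.

Lemma basis_in_transversals B : B \in bases -> B \in transversals K.
Proof.
move=> HB; have Bi i : exists x, x \in B :&: K i.
  by have [c cB cK] := basis_block_exists i HB; exists c; rewrite inE cB.
pose b := [ffun i => xchoose (Bi i)].
have /all_and2[bB bK] : forall i, b i \in B /\ b i \in K i.
  by move=> i; rewrite ffunE; apply/andP; rewrite -in_setI; apply: xchooseP.
rewrite inE; apply/existsP; exists b; rewrite (introT forallP bK) /=.
apply/eqP/setP=> x; apply/idP/imsetP=> [xB|[i _ ->] //].
have [i xi] := basis_mem_block HB xB.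
exists i => //; have := basis_setIblock HB xB xi.
by rewrite (basis_setIblock HB (bB i) (bK i)) => /set1_inj.
Qed.

Lemma basis_sub_transversal B S :
  B \in bases -> S \in transversals K -> B \subset S -> B = S.
Proof.
move=> HB; rewrite inE => /existsP[b /andP[/forallP bK /eqP->]] BS.
apply/eqP; rewrite eqEsubset BS; apply/subsetP=> _ /imsetP[i _ ->].
have [c cB cK] := basis_block_exists i HB.
have : c \in [set b j | j : 'I_t] :&: K i by rewrite inE (subsetP BS c cB).
by rewrite transversal_setIblock // inE => /eqP <-.
Qed.

Lemma basis_swap B c x i :
  B \in bases -> c \in B -> c \in K i -> x \in K i -> x |: (B :\ c) \in bases.
Proof.
case: bases_matroid => _ _ exchange HB cB cK xK.
have [->|neq_xc] := eqVneq x c; first by rewrite setD1K.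
have /bigcupP[B' HB' xB'] : x \in union_bases bases.
  by rewrite -blocks_cover; apply/bigcupP; exists i.
have cB' : c \notin B'.
  apply/negP=> cB'; have := basis_setIblock HB' cB' cK.
  rewrite (basis_setIblock HB' xB' xK) => /set1_inj xc.
  by rewrite xc eqxx in neq_xc.
have cBB' : c \in B :\: B' by rewrite inE cB' cB.
have [y /setDP[yB' _] HB''] := exchange B B' HB HB' c cBB'.
have yK : y \in K i.
  have [z] := basis_block_exists i HB''.
  rewrite !inE => /orP[/eqP-> //|/andP[zc zB] zK].
  have : z \in B :&: K i by rewrite inE zB.
  by rewrite (basis_setIblock HB cB cK) inE (negbTE zc).
have := basis_setIblock HB' yB' yK.
by rewrite (basis_setIblock HB' xB' xK) => /set1_inj->.
Qed.

Lemma transversals_in_bases S : S \in transversals K -> S \in bases.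
Proof.
move=> ST; case: bases_matroid => /set0Pn[B0 HB0] _ _.
case: (arg_minnP (fun B => #|B :\: S|) HB0) => B HB Bmin.
have [BS|/subsetPn[c cB cS]] := boolP (B \subset S).
  by rewrite -(basis_sub_transversal HB ST BS).
have [i cK] := basis_mem_block HB cB.
have /eqP/cards1P[s Hs] := transversals_meet_blocks i ST.
have /setIP[sS sK] : s \in S :&: K i by rewrite Hs set11.
have := Bmin _ (basis_swap HB cB cK sK).
by rewrite leqNgt (proper_card (setD_swap_proper cB cS sS)).
Qed.

End Transversals.

Theorem theorem9 (T : finType) (E : {set T}) (bases : {set {set T}})
  (t : nat) (K : 'I_t -> {set T}) :
  is_matroid_bases E bases ->
  injective K ->
  partition [set K i | i : 'I_t] (union_bases bases) ->
  (forall B, B \in bases -> forall i : 'I_t, #|B :&: K i| = 1) <->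
  bases = transversals K.
Proof.
move=> HM Kinj HP.
have Kdisj : forall i j x, x \in K i -> x \in K j -> i = j.
  exact: partition_blocks_disjoint Kinj HP.
have cover : \bigcup_(i < t) K i = union_bases bases.
  by move: HP => /and3P[/eqP]; rewrite cover_imset.
split=> [meet|-> B BT i]; last exact: (transversals_meet_blocks Kdisj i BT).
apply/setP=> B; apply/idP/idP.
  exact: basis_in_transversals.
exact: (transversals_in_bases Kdisj HM cover meet).
Qed.
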